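(* Let $H_5$ be the tournament with vertex set $\{1,2,3,4,5\}$ whose edges are $1\to4$ and $2\to5$, and $j\to i$ for every other pair $i<j$ (i.e., $2\to1$, $3\to1$, $5\to1$, $3\to2$, $4\to2$, $4\to3$, $5\to3$, $5\to4$). Then $H_5$ is not quasirandom-forcing.
   Context: A tournament is an orientation of a complete graph; $\mathrm{Aut}(H)$ is its automorphism group. For tournaments $H,G$, $d(H,G)$ is the probability that $\lvert H\rvert$ uniformly random distinct vertices of $G$ induce a tournament isomorphic to $H$ (and $0$ if $\lvert H\rvert>\lvert G\rvert$). A sequence $(G_n)$ of tournaments with $\lvert G_n\rvert\to\infty$ is quasirandom if $\lim_{n\to\infty} d(F,G_n)=\frac{m!}{\lvert\mathrm{Aut}(F)\rvert}2^{-\binom{m}{2}}$ for every tournament $F$ with $m$ vertices. A $k$-vertex tournament $H$ is quasirandom-forcing if every sequence $(G_n)$ of tournaments with $\lvert G_n\rvert\to\infty$ and $\lim_{n\to\infty} d(H,G_n)=\frac{k!}{\lvert\mathrm{Aut}(H)\rvert}2^{-\binom{k}{2}}$ is quasirandom. *)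

From HB Require Import structures.
From mathcomp Require Import all_boot all_order all_algebra all_fingroup.
From mathcomp Require Import all_classical all_reals all_analysis.
Set Implicit Arguments. Unset Strict Implicit. Unset Printing Implicit Defensive.
Import Order.TTheory GRing.Theory Num.Theory numFieldNormedType.Exports.
Local Open Scope classical_set_scope.
Local Open Scope ring_scope.

Definition is_tournament (n : nat) (E : rel 'I_n) : Prop :=
  (forall i, ~~ E i i) /\ (forall i j, i != j -> E i j = ~~ E j i).

Definition Aut (m : nat) (F : rel 'I_m) : {set {perm 'I_m}} :=
  [set s : {perm 'I_m} | [forall i, forall j, F (s i) (s j) == F i j]].

Definition induces_copy (k n : nat) (H : rel 'I_k) (G : rel 'I_n)
    (S : {set 'I_n}) : bool :=
  [exists f : {ffun 'I_k -> 'I_n},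
     injectiveb f && (f @: [set: 'I_k] == S) &&
     [forall i, forall j, H i j == G (f i) (f j)]].

(* d(H,G): probability that |H| uniformly random distinct vertices of G
   (i.e. a uniformly random |H|-subset) induce a copy of H; 0 if |H| > |G|. *)
Definition dens (R : realType) (k n : nat) (H : rel 'I_k) (G : rel 'I_n) : R :=
  if (n < k)%N then 0
  else (#|[set S : {set 'I_n} | (#|S| == k) && induces_copy H G S]|)%:R
       / ('C(n, k))%:R.

Definition rand_dens (R : realType) (m : nat) (F : rel 'I_m) : R :=
  (m`!)%:R / (#|Aut F|)%:R * (2%:R ^- 'C(m, 2)).

Definition tseq := nat -> {n : nat & rel 'I_n}.

Definition is_tseq (G : tseq) : Prop :=
  (forall n, is_tournament (projT2 (G n))) /\
  (forall M : nat, exists N : nat, forall n, (N <= n)%N -> (M <= projT1 (G n))%N).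

Definition quasirandom (R : realType) (G : tseq) : Prop :=
  forall (m : nat) (F : rel 'I_m), is_tournament F ->
    (fun n => dens R F (projT2 (G n))) @ \oo --> rand_dens R F.

Definition qr_forcing (R : realType) (k : nat) (H : rel 'I_k) : Prop :=
  forall G : tseq, is_tseq G ->
    (fun n => dens R H (projT2 (G n))) @ \oo --> rand_dens R H ->
    quasirandom R G.

(* H_5 on vertices 0..4 standing for 1..5: edges 1->4, 2->5, and j->i for
   every other pair i<j. *)
Definition H5 : rel 'I_5 := fun i j =>
  let a := (val i).+1 in let b := (val j).+1 in
  if ((a == 1) && (b == 4)) || ((a == 2) && (b == 5)) then true
  else if ((a == 4) && (b == 1)) || ((a == 5) && (b == 2)) then false
  else (b < a)%N.

(* Blow up the quadratic residue tournament QR7 by a factor s, each part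
   inducing a transitive tournament.  H5 embeds into QR7 in 21 ways with
   pairwise distinct images, so the blow-up has at least 21 s^5 copies of H5,
   more than a random tournament on 7s vertices, while the transitive
   tournament on 7s vertices has none because H5 contains a cyclic triangle.
   Switching the edges from the blow-up to the transitive tournament one pair
   at a time changes the number of copies of H5 by at most C(7s, 3) per step,
   so some intermediate tournament has H5-density within 20/(7s) of the random
   value.  All these tournaments are transitive on the first three parts, hence
   their density of the transitive tournament TT8 is at least (2/5)^8, well
   above the random value 8!/2^28.  Letting s grow gives a sequence which looks
   random to H5 but not to TT8. *)

From Pilot Require Import Defs.
From mathcomp Require Import all_boot all_order all_algebra all_fingroup.
From mathcomp Require Import all_classical all_reals all_analysis.
From mathcomp Require Import zify ring lra.
Set Implicit Arguments. Unset Strict Implicit. Unset Printing Implicit Defensive.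
Import Order.TTheory GRing.Theory Num.Theory numFieldNormedType.Exports.

Definition copies k n (H : rel 'I_k) (G : rel 'I_n) : nat :=
  #|[set S : {set 'I_n} | (#|S| == k) && induces_copy H G S]|.

Lemma induces_copyP k n (H : rel 'I_k) (G : rel 'I_n) (S : {set 'I_n}) :
  reflect (exists f : 'I_k -> 'I_n,
             [/\ injective f, [set f i | i : 'I_k] = S & forall i j, H i j = G (f i) (f j)])
          (induces_copy H G S).
Proof.
(* In [induces_copy] the image is taken over the classical full set. *)
have imsetT (f : 'I_k -> 'I_n) :
    [set f i | i in [set: 'I_k]%classic] = [set f i | i : 'I_k].
  by apply/setP => y; apply/imsetP/imsetP => -[i _ ->]; exists i; rewrite ?inE.
apply: (iffP existsP) => [[f /andP[/andP[/injectiveP f_inj /eqP fS] /forallP fH]]|].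
  by exists f; split=> // [|i j]; [rewrite -fS imsetT | exact/eqP/(forallP (fH i) j)].
move=> [f [f_inj fS fH]]; exists (finfun f).
rewrite (eq_imset _ (ffunE f)) imsetT fS eqxx andbT.
apply/andP; split; first by apply/injectiveP => i j; rewrite !ffunE => /f_inj.
by apply/forallP => i; apply/forallP => j; rewrite !ffunE fH.
Qed.

Lemma dens_copies (R : realType) k n (H : rel 'I_k) (G : rel 'I_n) : (k <= n)%N ->
  dens R H G = ((copies H G)%:R / ('C(n, k))%:R)%R.
Proof.
move=> kn; rewrite /dens ltnNge kn /=; congr (_%:R / _)%R.
by apply: eq_card => S; rewrite !inE; apply/idP/idP; rewrite in_setE.
Qed.

Lemma induces_copy_eq k n (H : rel 'I_k) (G G' : rel 'I_n) (S : {set 'I_n}) :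
  {in S &, G =2 G'} -> induces_copy H G S = induces_copy H G' S.
Proof.
suff copy_sub (G1 G2 : rel 'I_n) : {in S &, G1 =2 G2} ->
    induces_copy H G1 S -> induces_copy H G2 S.
  by move=> GG'; apply/idP/idP; apply: copy_sub => // x y xS yS; rewrite GG'.
move=> G12 /induces_copyP[f [f_inj fS fH]]; apply/induces_copyP; exists f.
by split=> // i j; rewrite fH G12 // -fS imset_f.
Qed.

Lemma tournament_hom_inj k m (H : rel 'I_k) (T : rel 'I_m) (f : 'I_k -> 'I_m) :
  is_tournament H -> (forall x, ~~ T x x) ->
  (forall i j, H i j = T (f i) (f j)) -> injective f.
Proof.
move=> [_ H_anti] T_irr fH i j fij; apply/eqP/negP => /negP ij.
by have := H_anti i j ij; rewrite !fH fij (negbTE (T_irr _)).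
Qed.

Lemma copies_le_update k n (H : rel 'I_k) (G G' : rel 'I_n) :
  (forall x, G x x = G' x x) ->
  (forall x y x' y', G x y != G' x y -> G x' y' != G' x' y' ->
     [set x; y] = [set x'; y']) ->
  (copies H G <= copies H G' + 'C(n, k - 2))%N.
Proof.
move=> diag one_pair.
case: (pickP (fun p : 'I_n * 'I_n => G p.1 p.2 != G' p.1 p.2)) => [[a b] /= Gab|same];
  last first.
  suff -> : G = G' by rewrite leq_addr.
  by apply/funext => x; apply/funext => y; apply/eqP/negPn; rewrite (same (x, y)).
have ab : a != b by apply: contraNneq Gab => ->; rewrite diag.
pose P := [set S : {set 'I_n} | (#|S| == k) && ([set a; b] \subset S)].
have copies_sub :
    [set S : {set 'I_n} | (#|S| == k) && induces_copy H G S] \subset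
    [set S : {set 'I_n} | (#|S| == k) && induces_copy H G' S] :|: P.
  apply/fintype.subsetP => S; rewrite !inE => /andP[-> copyG] /=.
  case abS: ([set a; b] \subset S); first by rewrite orbT.
  rewrite orbF -(induces_copy_eq _ _ (G := G)) // => x y xS yS.
  apply/eqP/negPn/negP => /one_pair/(_ Gab) xy_ab; move/negbT: abS => /negP; apply.
  by rewrite -xy_ab; apply/fintype.subsetP => z; rewrite !inE => /orP[] /eqP ->.
rewrite (leq_trans (subset_leq_card copies_sub)) // (leq_trans (leq_card_setU _ _)) //.
rewrite leq_add2l -[n in 'C(n, _)](card_ord n) -card_draws.
rewrite -(@card_in_imset _ _ (fun S => S :\: [set a; b]) P); last first.
  have setDK (S : {set 'I_n}) :
      [set a; b] \subset S -> S :\: [set a; b] :|: [set a; b] = S.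
    move/fintype.subsetP => abS; apply/setP => x; rewrite finset.in_setU finset.in_setD.
    by case: (boolP (x \in [set a; b])) => [/abS -> | _]; rewrite ?orbT ?andbT ?orbF.
  move=> S S'; rewrite !inE => /andP[_ abS] /andP[_ abS'] eqD.
  by rewrite -(setDK _ abS) -(setDK _ abS') eqD.
apply/subset_leq_card/fintype.subsetP => D /imsetP[S].
rewrite !inE => /andP[/eqP cardS abS] ->.
by rewrite cardsDS // cardS cards2 ab.
Qed.

Section DiscreteIVT.
Local Open Scope ring_scope.

Lemma discrete_ivt (R : realType) (a : nat -> R) (X D : R) (M : nat) :
  0 <= D -> X <= a 0%N -> a M <= X ->
  (forall t, (t < M)%N -> `|a t.+1 - a t| <= D) ->
  exists t, `|a t - X| <= D.
Proof.
move=> D_ge0; elim: M => [|M IH] a0X aMX steps.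
  exists 0%N; suff -> : a 0%N = X by rewrite subrr normr0.
  by apply/le_anti; rewrite a0X aMX.
have [aMX'|XaM] := leP (a M) X; first by apply: IH => // t /ltnW; apply: steps.
exists M; move: (steps M (ltnSn M)); rewrite !ler_norml => /andP[? ?].
by apply/andP; split; lra.
Qed.

End DiscreteIVT.

Section Interpolation.
Variables (n : nat) (B T : rel 'I_n).

Definition interpolate (t : nat) : rel 'I_n :=
  fun u v => if (enum_rank [set u; v] < t)%N then T u v else B u v.

Lemma interpolate0 : interpolate 0 = B.
Proof. by apply/funext => u; apply/funext => v; rewrite /interpolate ltn0. Qed.

Lemma interpolate_card : interpolate #|{set 'I_n}| = T.
Proof. by apply/funext => u; apply/funext => v; rewrite /interpolate ltn_ord. Qed.

Lemma interpolate_agree t u v : B u v = T u v -> interpolate t u v = B u v.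
Proof. by rewrite /interpolate; case: ifP. Qed.

Lemma interpolateS_neq t x y :
  interpolate t.+1 x y != interpolate t x y -> enum_rank [set x; y] = t :> nat.
Proof. by rewrite /interpolate ltnS; case: ltngtP; rewrite ?eqxx. Qed.

Hypotheses (B_tour : is_tournament B) (T_tour : is_tournament T).

Lemma interpolate_tournament t : is_tournament (interpolate t).
Proof.
have [[B_irr B_anti] [T_irr T_anti]] := (B_tour, T_tour).
split=> [u|u v uv]; rewrite /interpolate; first by case: ifP.
by rewrite finset.setUC; case: ifP => _; [apply: T_anti | apply: B_anti].
Qed.

Lemma copies_interpolateS k (H : rel 'I_k) t :
  (copies H (interpolate t.+1) <= copies H (interpolate t) + 'C(n, k - 2))%N /\
  (copies H (interpolate t) <= copies H (interpolate t.+1) + 'C(n, k - 2))%N.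
Proof.
have diag t' x : interpolate t' x x = false.
  by apply/negbTE; case: (interpolate_tournament t').
have one_pair x y x' y' : interpolate t.+1 x y != interpolate t x y ->
    interpolate t.+1 x' y' != interpolate t x' y' -> [set x; y] = [set x'; y'].
  move=> /interpolateS_neq e /interpolateS_neq e'.
  by apply/enum_rank_inj/val_inj; rewrite /= e e'.
split; apply: copies_le_update => [x|x y x' y']; rewrite ?diag //; first exact: one_pair.
by rewrite ![interpolate t _ _ == _]eq_sym; apply: one_pair.
Qed.

Section Reals.
Local Open Scope ring_scope.
Variable R : realType.

Lemma interpolate_copies_near k (H : rel 'I_k) (X : R) :
  (copies H T)%:R <= X -> X <= (copies H B)%:R ->
  exists t, `|(copies H (interpolate t))%:R - X| <= ('C(n, k - 2))%:R.
Proof.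
move=> TX XB; apply: (discrete_ivt (M := #|{set 'I_n}|));
  rewrite ?interpolate0 ?interpolate_card //.
move=> t _; have [le1 le2] := copies_interpolateS H t.
by rewrite ler_norml -!(ler_nat R) !natrD in le1 le2 *; apply/andP; split; lra.
Qed.

Lemma interpolate_dens_near k (H : rel 'I_k) (r : R) : (k <= n)%N ->
  (copies H T)%:R <= r * ('C(n, k))%:R <= (copies H B)%:R ->
  exists t, `|dens R H (interpolate t) - r| <= ('C(n, k - 2))%:R / ('C(n, k))%:R.
Proof.
move=> kn /andP[TX XB]; have [t near] := interpolate_copies_near TX XB.
have C_gt0 : 0 < ('C(n, k))%:R :> R by rewrite ltr0n bin_gt0.
exists t; rewrite dens_copies // -[r](mulfK (lt0r_neq0 C_gt0)) -mulrBl normrM.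
by rewrite [`|_^-1|]gtr0_norm ?invr_gt0 // ler_wpM2r // invr_ge0 ltW.
Qed.

End Reals.
End Interpolation.

Definition transitive_tournament n : rel 'I_n := fun u v => (u < v)%N.
Arguments transitive_tournament : clear implicits.

Lemma transitive_tournamentP n : is_tournament (transitive_tournament n).
Proof.
split=> [u|u v uv]; rewrite /transitive_tournament ?ltnn //.
by rewrite ltn_neqAle -leqNgt (inj_eq val_inj) uv.
Qed.

Lemma copies_transitive_cycle k n (H : rel 'I_k) i j l :
  H i j -> H j l -> H l i -> copies H (transitive_tournament n) = 0%N.
Proof.
move=> Hij Hjl Hli; apply/eqP; rewrite cards_eq0; apply/eqP/setP => S.
rewrite !inE; apply/negbTE/nandP; right; apply/induces_copyP => -[f [_ _ fH]].
move: Hij Hjl Hli; rewrite !fH /transitive_tournament => ij jl li.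
by have := ltn_trans ij (ltn_trans jl li); rewrite ltnn.
Qed.

Lemma induces_copy_transitive k n (G : rel 'I_n) (S : {set 'I_n}) :
  #|S| = k -> {in S &, forall u v, G u v = (u < v)%N} ->
  induces_copy (transitive_tournament k) G S.
Proof.
move=> cardS GS; pose f (i : 'I_k) := Order.enum_val (cast_ord (esym cardS) i).
have f_mono : {mono f : i j / (i < j)%N}.
  move=> i j; have cast_mono := leW_mono (Order.le_enum_val (@le_total _ 'I_n) (A := S)).
  exact: cast_mono (cast_ord (esym cardS) i) (cast_ord (esym cardS) j).
have f_inj : injective f by apply: inj_comp; [exact: Order.enum_val_inj | exact: cast_ord_inj].
apply/induces_copyP; exists f; split=> // [|i j].
  apply/eqP; rewrite eqEcard card_imset // card_ord cardS leqnn andbT.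
  by apply/fintype.subsetP => _ /imsetP[i _ ->]; exact: Order.enum_valP.
by rewrite GS ?Order.enum_valP // /transitive_tournament f_mono.
Qed.

Lemma binomial_le_copies_transitive k n M (G : rel 'I_n) : (M <= n)%N ->
  (forall u v : 'I_n, (u < M)%N -> (v < M)%N -> G u v = (u < v)%N) ->
  ('C(M, k) <= copies (transitive_tournament k) G)%N.
Proof.
move=> Mn GM; have widen_inj : injective (widen_ord Mn).
  by move=> a b /(congr1 val) /= /val_inj.
rewrite -[M in 'C(M, _)](card_ord M) -card_draws -(card_imset _ (imset_inj widen_inj)).
apply/subset_leq_card/fintype.subsetP => S /imsetP[A]; rewrite inE => /eqP cardA ->.
rewrite inE card_imset // cardA eqxx /=.
apply: induces_copy_transitive; first by rewrite card_imset.
by move=> _ _ /imsetP[a _ ->] /imsetP[b _ ->]; apply: GM; rewrite /= ltn_ord.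
Qed.

Section Blowup.
Variables (m s : nat).

Lemma part_subproof (u : 'I_(m * s)) : (u %/ s < m)%N.
Proof. by case: s u => [|s'] [u /=]; rewrite ?muln0 // ltn_divLR. Qed.

Definition part (u : 'I_(m * s)) : 'I_m := Ordinal (part_subproof u).

Lemma vertex_subproof (a : 'I_m) (j : 'I_s) : (a * s + j < m * s)%N.
Proof. by have := ltn_ord a; have := ltn_ord j; nia. Qed.

Definition vertex (a : 'I_m) (j : 'I_s) : 'I_(m * s) := Ordinal (vertex_subproof a j).

Lemma part_vertex a j : part (vertex a j) = a.
Proof.
by apply: val_inj; rewrite /= divnMDl ?divn_small ?addn0 // (leq_ltn_trans _ (ltn_ord j)).
Qed.

Lemma vertex_inj a b j l : vertex a j = vertex b l -> a = b /\ j = l.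
Proof.
move=> ajbl; have ab : a = b by rewrite -(part_vertex a j) ajbl part_vertex.
by split=> //; apply: val_inj; move/(congr1 val): ajbl; rewrite /= ab => /addnI.
Qed.

Definition blowup (T : rel 'I_m) : rel 'I_(m * s) :=
  fun u v => if part u == part v then (u < v)%N else T (part u) (part v).

Variable T : rel 'I_m.

Lemma blowup_tournament : is_tournament T -> is_tournament (blowup T).
Proof.
move=> [T_irr T_anti]; split=> [u|u v uv]; rewrite /blowup ?eqxx ?ltnn //.
rewrite [part v == _]eq_sym; have [_|/T_anti //] := eqVneq (part u) (part v).
by rewrite ltn_neqAle -leqNgt (inj_eq val_inj) uv.
Qed.

Lemma blowup_vertex a b j l : a != b -> blowup T (vertex a j) (vertex b l) = T a b.
Proof. by rewrite /blowup !part_vertex => /negbTE ->. Qed.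

Lemma blowup_prefix p :
  (forall a b : 'I_m, (a < p)%N -> (b < p)%N -> T a b = (a < b)%N) ->
  forall u v : 'I_(m * s), (u < p * s)%N -> (v < p * s)%N -> blowup T u v = (u < v)%N.
Proof.
move=> T_prefix u v up vp; have s_gt0 : (0 < s)%N.
  by have := leq_ltn_trans (leq0n u) up; rewrite muln_gt0 => /andP[].
have part_lt (w : 'I_(m * s)) : (w < p * s)%N -> (part w < p)%N by rewrite /= ltn_divLR.
rewrite /blowup; case: eqP => [//|/eqP/negbTE puv]; rewrite T_prefix ?part_lt //=.
have uv : (u %/ s == v %/ s) = false := puv.
case: (ltngtP u v) => [/ltnW/(leq_div2r s)|/ltnW/(leq_div2r s)|->].
- by rewrite leq_eqVlt uv.
- by rewrite ltnNge => ->.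
- by rewrite ltnn.
Qed.

Lemma blowup_copies k (H : rel 'I_k) (Q : finType) (phi : Q -> 'I_k -> 'I_m) :
  is_tournament H -> is_tournament T ->
  (forall q i j, H i j = T (phi q i) (phi q j)) ->
  (forall q q', (forall i, exists j, phi q i = phi q' j) -> q = q') ->
  (#|Q| * s ^ k <= copies H (blowup T))%N.
Proof.
move=> H_tour T_tour phiH phi_distinct.
have phi_inj q : injective (phi q) := tournament_hom_inj H_tour T_tour.1 (phiH q).
pose embed (p : Q * {ffun 'I_k -> 'I_s}) i := vertex (phi p.1 i) (p.2 i).
have embed_inj p : injective (embed p) by move=> i j /vertex_inj[/phi_inj].
pose copy p := [set embed p i | i : 'I_k].
have copy_inj : injective copy.
  move=> [q x] [q' x'] eq_copy.
  have embed_in i : exists j, embed (q, x) i = embed (q', x') j.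
    have : embed (q, x) i \in copy (q', x') by rewrite -eq_copy imset_f.
    by case/imsetP=> j _ ->; exists j.
  have qq' : q = q'.
    by apply: phi_distinct => i; have [j /vertex_inj[]] := embed_in i; exists j.
  subst q'; congr pair; apply/ffunP => i.
  by have [j /vertex_inj[/phi_inj <-]] := embed_in i.
have -> : (#|Q| * s ^ k = #|copy @: [set: Q * {ffun 'I_k -> 'I_s}]|)%N.
  by rewrite card_imset // cardsT card_prod card_ffun !card_ord.
apply/subset_leq_card/fintype.subsetP => _ /imsetP[p _ ->].
rewrite inE card_imset // card_ord eqxx /=; apply/induces_copyP; exists (embed p).
split=> // i j; have [i_j|ij] := eqVneq i j.
  have [blowup_irr _] := blowup_tournament T_tour; have [H_irr _] := H_tour.
  by rewrite i_j (negbTE (H_irr j)) (negbTE (blowup_irr _)).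
by rewrite blowup_vertex ?(inj_eq (phi_inj _)) // phiH.
Qed.

End Blowup.
Arguments blowup {m} s T _ _.

Section RandomDensity.
Local Open Scope ring_scope.
Variables (R : realType) (m : nat) (F : rel 'I_m).

Lemma card_Aut_gt0 : (0 < #|Defs.Aut F|)%N.
Proof.
apply/card_gt0P; exists 1%g; rewrite inE.
by apply/forallP => i; apply/forallP => j; rewrite !perm1.
Qed.

Lemma rand_dens_ge0 : 0 <= rand_dens R F.
Proof. by rewrite /rand_dens !mulr_ge0 ?invr_ge0 ?exprn_ge0 ?ler0n. Qed.

Lemma rand_dens_le : rand_dens R F <= (m`!)%:R / (2 ^ 'C(m, 2))%:R.
Proof.
rewrite /rand_dens natrX ler_wpM2r ?invr_ge0 ?exprn_ge0 ?ler0n //.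
by rewrite ler_pdivrMr ?ltr0n ?card_Aut_gt0 // ler_peMr ?ler0n // ler1n card_Aut_gt0.
Qed.

End RandomDensity.

Section NotForcing.
Local Open Scope ring_scope.
Local Open Scope classical_set_scope.

Lemma not_qr_forcing_of_witnesses (R : realType) k m (H : rel 'I_k) (F : rel 'I_m)
    (C c : R) :
  is_tournament F -> rand_dens R F < c ->
  (forall n, exists G : {N : nat & rel 'I_N},
     [/\ (n <= projT1 G)%N, is_tournament (projT2 G),
         `|dens R H (projT2 G) - rand_dens R H| <= C / (projT1 G)%:R &
         c <= dens R F (projT2 G)]) ->
  ~ qr_forcing R H.
Proof.
move=> F_tour F_lt witnesses forcing.
have [G G_spec] := choice witnesses.
have G_tseq : is_tseq G.
  split=> [n|M]; first by case: (G_spec n).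
  by exists M => n Mn; case: (G_spec n) => /(leq_trans Mn).
have H_dens : (fun n => dens R H (projT2 (G n))) @ \oo --> rand_dens R H.
  apply/cvgrPdist_le => e e_gt0.
  have [N0 N0_gt] : exists N0 : nat, C / e < N0%:R by eexists; apply: truncnS_gt.
  exists N0.+1 => // n /= N0n; have [nG _ HG _] := G_spec n.
  have G_gt : N0%:R < (projT1 (G n))%:R :> R by rewrite ltr_nat (leq_trans N0n).
  rewrite distrC (le_trans HG) // ler_pdivrMr ?(le_lt_trans _ G_gt) //.
  by rewrite mulrC -ler_pdivrMr // (le_trans (ltW N0_gt)) // ltW.
have := forcing G G_tseq H_dens m F F_tour.
move=> /cvgrPdist_lt /(_ (c - rand_dens R F)); rewrite subr_gt0 F_lt.
move=> /(_ isT) [N _ /(_ N (leqnn N))]; have [_ _ _ cF] := G_spec N.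
by rewrite ltr_norml => /andP[? _]; lra.
Qed.

End NotForcing.

Lemma H5_tournament : is_tournament H5.
Proof.
split; first by case=> [[|[|[|[|[|//]]]]] ?].
by do 2!case=> [[|[|[|[|[|//]]]]] ?].
Qed.

Lemma H5_cycle : [/\ H5 (@Ordinal 5 0 isT) (@Ordinal 5 3 isT),
  H5 (@Ordinal 5 3 isT) (@Ordinal 5 1 isT) & H5 (@Ordinal 5 1 isT) (@Ordinal 5 0 isT)].
Proof. by []. Qed.

Lemma all_iota_ord (n : nat) (P : pred nat) : all P (iota 0 n) -> forall i : 'I_n, P i.
Proof. by move=> /allP P_iota i; rewrite P_iota // mem_iota ltn_ord. Qed.

Section QR7.
Local Open Scope ring_scope.

Definition residues7 : seq 'Z_7 := [:: 1; 2; 4].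

Definition qr7 : rel 'I_7 := fun a b => (b - a : 'Z_7) \in residues7.

Lemma residues7N (t : 'Z_7) : t != 0 -> (- t \in residues7) = (t \notin residues7).
Proof. by case: t => [[|[|[|[|[|[|[|//]]]]]]] ?]. Qed.

Lemma residues7M (c t : 'Z_7) : c \in residues7 -> (c * t \in residues7) = (t \in residues7).
Proof. by case: c => [[|[|[|[|[|[|[|//]]]]]]] ?]; case: t => [[|[|[|[|[|[|[|//]]]]]]] ?]. Qed.

Lemma qr7_tournament : is_tournament qr7.
Proof.
split=> [a|a b ab]; rewrite /qr7 ?subrr //.
by rewrite -opprB residues7N // subr_eq0.
Qed.

Lemma qr7_prefix (a b : 'I_7) : (a < 3)%N -> (b < 3)%N -> qr7 a b = (a < b)%N.
Proof. by case: a => [[|[|[|a]]] ?]; case: b => [[|[|[|b]]] ?]. Qed.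

Definition h5_in_qr7 (i : 'I_5) : 'Z_7 := nth 0 [:: 0; 3; 6; 2; 5] i.

(* The maps x |-> c x + d with c a nonzero square are automorphisms of QR7. *)
Definition h5_in_qr7_aff (q : 'I_3 * 'Z_7) (i : 'I_5) : 'Z_7 :=
  nth 0 residues7 q.1 * h5_in_qr7 i + q.2.

Lemma h5_in_qr7_hom (i j : 'I_5) : H5 i j = qr7 (h5_in_qr7 i) (h5_in_qr7 j).
Proof. by case: i => [[|[|[|[|[|//]]]]] ?]; case: j => [[|[|[|[|[|//]]]]] ?]. Qed.

Lemma h5_in_qr7_aff_hom q i j : H5 i j = qr7 (h5_in_qr7_aff q i) (h5_in_qr7_aff q j).
Proof.
rewrite /qr7 /h5_in_qr7_aff (_ : _ - _ = nth 0 residues7 q.1 * (h5_in_qr7 j - h5_in_qr7 i)).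
  by rewrite residues7M ?mem_nth // h5_in_qr7_hom.
by rewrite opprD addrACA subrr addr0 mulrBr.
Qed.

Lemma h5_in_qr7_aff_distinct_check :
  all (fun c => all (fun d => all (fun c' => all (fun d' =>
    ((c == c') && (d == d')) ||
    has (fun i => all (fun j => h5_in_qr7_aff (inZp c, inZp d) (inZp i) !=
                                h5_in_qr7_aff (inZp c', inZp d') (inZp j))
                      (iota 0 5)) (iota 0 5))
  (iota 0 7)) (iota 0 3)) (iota 0 7)) (iota 0 3).
Proof. by vm_compute. Qed.

Lemma h5_in_qr7_aff_distinct q q' :
  (forall i, exists j, h5_in_qr7_aff q i = h5_in_qr7_aff q' j) -> q = q'.
Proof.
case: q q' => [c d] [c' d'] h5_sub.
move: h5_in_qr7_aff_distinct_check.
move=> /all_iota_ord/(_ c)/all_iota_ord/(_ d)/all_iota_ord/(_ c')/all_iota_ord/(_ d').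
rewrite !valZpK => /orP[/andP[/eqP/val_inj-> /eqP/val_inj->] // | /hasP[i _ /allP i_out]].
have [j] := h5_sub (inZp i).
by move/eqP; apply: contraTeq => _; rewrite -(valZpK j) i_out // mem_iota ltn_ord.
Qed.

End QR7.

Lemma copies_H5_blowup s : (21 * s ^ 5 <= copies H5 (blowup s qr7))%N.
Proof.
have := blowup_copies s H5_tournament qr7_tournament h5_in_qr7_aff_hom h5_in_qr7_aff_distinct.
by rewrite card_prod !card_ord.
Qed.

Lemma ffact_le_expn n m : (n ^_ m <= n ^ m)%N.
Proof.
elim: m => [|m IHm]; first by rewrite ffactn0.
by rewrite ffactnSr expnSr leq_mul // leq_subr.
Qed.

Lemma expn_sub_le_ffact n m : ((n - m) ^ m <= n ^_ m)%N.
Proof.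
elim: m => [|m IHm]; first by rewrite ffactn0.
rewrite ffactnSr expnSr leq_mul ?leq_sub2l // (leq_trans _ IHm) //.
by case: m {IHm} => [|m]; rewrite ?expn0 // leq_exp2r // leq_sub2l.
Qed.

(* 2688 = 21 * 128: since rand_dens H5 <= 5!/2^10 = 15/128, the random count of
   copies of H5 on 7s vertices stays below the 21 s^5 copies in the blow-up. *)
Lemma binomial_H5_bound s : (15 * 'C(7 * s, 5) <= 2688 * s ^ 5)%N.
Proof.
rewrite -(@leq_pmul2r 5`!) ?fact_gt0 // -mulnA bin_ffact.
rewrite (leq_trans (leq_mul (leqnn 15) (ffact_le_expn _ _))) // expnMn.
by rewrite !factS fact0; lia.
Qed.

(* (3s - 8) / 7s >= 2/5 as soon as s >= 40. *)
Lemma binomial_transitive8_bound s : (40 <= s)%N ->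
  (2 ^ 8 * 'C(7 * s, 8) <= 5 ^ 8 * 'C(3 * s, 8))%N.
Proof.
move=> s_ge40; rewrite -(@leq_pmul2r 8`!) ?fact_gt0 //.
rewrite -[(2 ^ 8 * _ * _)%N]mulnA -[(5 ^ 8 * _ * _)%N]mulnA !bin_ffact.
apply: (@leq_trans (2 ^ 8 * (7 * s) ^ 8)); first exact: leq_mul (leqnn _) (ffact_le_expn _ _).
apply: (@leq_trans (5 ^ 8 * (3 * s - 8) ^ 8)).
  by rewrite -!expnMn leq_exp2r //; lia.
exact: leq_mul (leqnn _) (expn_sub_le_ffact _ _).
Qed.

Lemma binomial_error_bound N : (8 <= N)%N -> (N * 'C(N, 3) <= 20 * 'C(N, 5))%N.
Proof.
move=> N_ge8; have C5 := mul_bin_left N 4; have C4 := mul_bin_left N 3.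
have -> : (20 * 'C(N, 5) = (N - 4) * (N - 3) * 'C(N, 3))%N.
  by rewrite -mulnA -C4 mulnCA -C5; lia.
by rewrite leq_mul2r; apply/orP; right; nia.
Qed.

Section Witness.
Local Open Scope ring_scope.
Variable R : realType.

Lemma rand_dens_H5_le : rand_dens R H5 <= 15%:R / 128%:R.
Proof.
apply: (le_trans (rand_dens_le R H5)).
rewrite ler_pdivrMr ?ltr0n ?expn_gt0 // mulrAC ler_pdivlMr ?ltr0n // -!natrM ler_nat.
have -> : 'C(5, 2) = 10%N by [].
by rewrite !factS fact0; lia.
Qed.

Lemma rand_dens_transitive8_lt :
  rand_dens R (transitive_tournament 8) < (2 ^ 8)%:R / (5 ^ 8)%:R.
Proof.
apply: (le_lt_trans (rand_dens_le R _)).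
rewrite ltr_pdivrMr ?ltr0n ?expn_gt0 // mulrAC ltr_pdivlMr ?ltr0n ?expn_gt0 //.
have -> : 'C(8, 2) = 28%N by [].
by rewrite -!natrM ltr_nat !factS fact0; lia.
Qed.

Lemma blowup_interpolation_witness s : (40 <= s)%N ->
  exists G : rel 'I_(7 * s), [/\ is_tournament G,
    `|dens R H5 G - rand_dens R H5| <= 20%:R / (7 * s)%:R &
    (2 ^ 8)%:R / (5 ^ 8)%:R <= dens R (transitive_tournament 8) G].
Proof.
move=> s_ge40; set N := (7 * s)%N; have N_ge8 : (8 <= N)%N by rewrite /N; lia.
have B_tour := blowup_tournament s qr7_tournament.
have T_tour := transitive_tournamentP N.
have C5_gt0 : 0 < ('C(N, 5))%:R :> R by rewrite ltr0n bin_gt0; lia.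
have copies_bounds : (copies H5 (transitive_tournament N))%:R
    <= rand_dens R H5 * ('C(N, 5))%:R <= (copies H5 (blowup s qr7))%:R.
  have [c1 c2 c3] := H5_cycle; rewrite (copies_transitive_cycle _ c1 c2 c3).
  rewrite mulr_ge0 ?rand_dens_ge0 ?ler0n //=.
  apply: (le_trans (ler_wpM2r (ler0n _ _) rand_dens_H5_le)).
  apply: (@le_trans _ _ (21 * s ^ 5)%N%:R); last by rewrite ler_nat copies_H5_blowup.
  rewrite mulrAC ler_pdivrMr ?ltr0n // -!natrM ler_nat.
  by have := binomial_H5_bound s; rewrite /N; lia.
have [t near] :=
  interpolate_dens_near B_tour T_tour (leq_trans (isT : 5 <= 8)%N N_ge8) copies_bounds.
exists (interpolate (blowup s qr7) (transitive_tournament N) t); split.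
- exact: interpolate_tournament.
- rewrite (le_trans near) // ler_pdivrMr // mulrAC ler_pdivlMr ?ltr0n; last by rewrite /N; lia.
  by rewrite -!natrM ler_nat mulnC binomial_error_bound.
- have prefix (u v : 'I_N) : (u < 3 * s)%N -> (v < 3 * s)%N ->
      interpolate (blowup s qr7) (transitive_tournament N) t u v = (u < v)%N.
    by move=> u3 v3; rewrite interpolate_agree (blowup_prefix qr7_prefix).
  have := binomial_le_copies_transitive 8 (leq_mul (isT : 3 <= 7)%N (leqnn s)) prefix.
  move=> C8_le; rewrite dens_copies // ler_pdivlMr ?ltr0n ?bin_gt0 //.
  rewrite mulrAC ler_pdivrMr ?ltr0n ?expn_gt0 // -!natrM ler_nat [X in (_ <= X)%N]mulnC.
  by apply: leq_trans (binomial_transitive8_bound s_ge40) _; rewrite leq_mul2l C8_le orbT.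
Qed.

End Witness.

Theorem mainTheorem6 (R : realType) : is_tournament H5 /\ ~ qr_forcing R H5.
Proof.
split; first exact: H5_tournament.
apply: (not_qr_forcing_of_witnesses (C := 20%:R) (transitive_tournamentP 8)
                                     (rand_dens_transitive8_lt R)).
move=> n; have [G [G_tour H5_near T8_dense]] := blowup_interpolation_witness R (leq_addl n 40).
by exists (existT _ _ G); split=> //=; lia.
Qed.
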